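(* Let $n\ge 1$ and $\gamma_1,\dots,\gamma_n>0$. For $i=1,\dots,n$ let $H_i$ be a system $\dot x_i=f_i(x_i,u_i)$, $y_i=h_i(x_i)$ ($x_i\in\mathbb{R}^{m_i}$, $u_i,y_i\in\mathbb{R}$) with a $C^1$ function $V_i$ satisfying $\nabla V_i(x_i)\cdot f_i(x_i,u_i)\le -h_i(x_i)^2+\gamma_iu_ih_i(x_i)$ for all $x_i,u_i$. Consider the cascade $u_1=u$ (external input $u\in\mathbb{R}$), $u_i=y_{i-1}$ for $i=2,\dots,n$, and write $y=(y_1,\dots,y_n)$. Then for every $$\delta>\gamma_1\cdots\gamma_n\cos\big(\pi/(n+1)\big)^{n+1}$$ there exist $d_1,\dots,d_n>0$ and $\epsilon>0$ such that $V=\sum_{i=1}^nd_iV_i$ satisfies, along the cascade dynamics and for all inputs $u$, $$\dot V\le-\epsilon|y|^2+\delta u^2+u\,y_n.$$ *)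

From HB Require Import structures.
From mathcomp Require Import all_boot all_order all_algebra.
From mathcomp Require Import all_classical all_reals all_analysis.
Set Implicit Arguments. Unset Strict Implicit. Unset Printing Implicit Defensive.
Import Order.TTheory GRing.Theory Num.Theory.
Import numFieldNormedType.Exports.
Local Open Scope ring_scope.

(* Subsystems are indexed by i = 0, ..., n-1 (paper: 1, ..., n).
   Input of subsystem i in the cascade: u_0 = u (external input),
   u_{i} = y_{i-1} = h_{i-1}(x_{i-1}) for i >= 1. *)
Definition cascade_input (R : realType) (m : nat -> nat)
  (h : forall i, 'rV[R]_(m i) -> R) (x : forall i, 'rV[R]_(m i)) (u : R)
  (i : nat) : R :=
  match i with
  | 0 => u
  | j.+1 => h j (x j)
  end.

Definition C1 (R : realType) (k : nat) (V : 'rV[R]_k -> R) : Prop :=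
  (forall x, differentiable V x) /\ (forall v, continuous (fun x => 'd V x v)).

From HB Require Import structures.
From mathcomp Require Import all_boot all_order all_algebra.
From mathcomp Require Import all_classical all_reals all_analysis.
From mathcomp Require Import ring lra zify.
Set Implicit Arguments. Unset Strict Implicit. Unset Printing Implicit Defensive.
Import Order.TTheory GRing.Theory Num.Theory.
Import numFieldNormedType.Exports.
Local Open Scope ring_scope.

(* With w_0 = sqrt(delta) u and w_k = y_k / T_k, where
   T_k = gamma_1 ... gamma_k / (sqrt(delta) b^k) and b^(n+1) = gamma_1 ... gamma_n / delta,
   the weights d_k = T_k^-2 turn the supply rates into
   - sum_k w_k^2 + b sum_k w_(k-1) w_k, while delta u^2 = w_0^2 and u y_n = b w_0 w_n.
   The claim then reduces to b times the quadratic form of the (n+1)-cycle whose closing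
   edge has sign -1 being strictly dominated by sum_k w_k^2, i.e. to b cos(pi/(n+1)) < 1,
   which is exactly the hypothesis on delta.
   That form is bounded by cos(pi/(n+1)) sum_k w_k^2 using the positive sequence
   v_j = sin((2j+1) pi/(2n+2)): substituting w = v x splits the path part of the form into
   sum_j v_j v_(j+1) (x_(j+1) - x_j)^2 plus a diagonal term, and Cauchy-Schwarz applied to
   the telescoping sum of the x_(j+1) - x_j absorbs the closing edge. *)

Section CauchySchwarz.
Variable R : realFieldType.

Lemma sqrD_divD_le (a c p q : R) : 0 < p -> 0 < q ->
  (a + c) ^+ 2 / (p + q) <= a ^+ 2 / p + c ^+ 2 / q.
Proof.
move=> p_gt0 q_gt0; rewrite -subr_ge0.
have -> : a ^+ 2 / p + c ^+ 2 / q - (a + c) ^+ 2 / (p + q)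
    = (q * a - p * c) ^+ 2 / (p * q * (p + q)).
  by field; rewrite ?gt_eqF ?addr_gt0.
by rewrite divr_ge0 ?sqr_ge0 // ltW // !mulr_gt0 // addr_gt0.
Qed.

Lemma sqr_sum_div_le (k : nat) (a p : nat -> R) :
  (forall i, (i < k)%N -> 0 < p i) ->
  (\sum_(i < k) a i) ^+ 2 / \sum_(i < k) p i <= \sum_(i < k) a i ^+ 2 / p i.
Proof.
elim: k => [|k IH] p_gt0; first by rewrite !big_ord0 expr0n mul0r.
rewrite !big_ord_recr /=.
case: k IH p_gt0 => [|k] IH p_gt0; first by rewrite !big_ord0 !add0r.
have sum_p_gt0 : 0 < \sum_(i < k.+1) p i.
  rewrite big_ord_recr /= (lt_le_trans (p_gt0 k _)) // lerDr.
  by apply: sumr_ge0 => i _; apply/ltW/p_gt0; have := ltn_ord i; lia.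
apply: le_trans (sqrD_divD_le _ _ sum_p_gt0 (p_gt0 k.+1 _)) _ => //.
by rewrite lerD2r IH // => i /ltnW; exact: p_gt0.
Qed.

End CauchySchwarz.

(* The cycle 0 - 1 - ... - n.+1 - 0 with the closing edge of sign -1; the largest
   eigenvalue of this form is cos (pi / n.+2). *)
Definition antiperiodic_form {R : ringType} (n : nat) (w : nat -> R) :=
  \sum_(i < n.+1) w i * w i.+1 - w 0%N * w n.+1.

Lemma sqrB_ground_state (R : fieldType) (v v' w w' : R) : v != 0 -> v' != 0 ->
  (w' - w) ^+ 2
  = v * v' * (w' / v' - w / v) ^+ 2 + (v' - v) * (w' ^+ 2 / v' - w ^+ 2 / v).
Proof. by move=> v_neq0 v'_neq0; field; rewrite v_neq0 v'_neq0. Qed.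

Section AntiperiodicPath.
Variables (R : realFieldType) (n : nat) (v : nat -> R) (lam : R).
Hypothesis v_gt0 : forall j, (j <= n.+1)%N -> 0 < v j.
(* v_first and v_last are v_rec at the two ends, with v_(-1) = - v_0 and v_(n+2) = - v_(n+1). *)
Hypothesis v_first : v 1%N = (3 - lam) * v 0%N.
Hypothesis v_rec : forall j, (0 < j <= n)%N -> v j.-1 + v j.+1 = (2 - lam) * v j.
Hypothesis v_last : v n = (3 - lam) * v n.+1.
Hypothesis v_end : v n.+1 = v 0%N.
Hypothesis v_sum : \sum_(i < n.+1) (v i * v i.+1)^-1 = (v 0%N ^+ 2)^-1.

Lemma ground_state_potential_partial (w : nat -> R) j : (j <= n)%N ->
  \sum_(i < j.+1) (v i.+1 - v i) * (w i.+1 ^+ 2 / v i.+1 - w i ^+ 2 / v i)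
  = lam * \sum_(i < j) w i.+1 ^+ 2 + (v j.+1 - v j) * w j.+1 ^+ 2 / v j.+1
    + (lam - 2) * w 0%N ^+ 2.
Proof.
have v_neq0 k : (k <= n.+1)%N -> v k != 0 by move=> ?; rewrite gt_eqF ?v_gt0.
elim: j => [_|j IH Sj_le_n].
  have lamE : lam = 3 - v 1%N / v 0%N by rewrite v_first; field; rewrite v_neq0.
  rewrite big_ord1 big_ord0 /= mulr0 add0r lamE.
  by field; rewrite !v_neq0.
have vj : v j = (2 - lam) * v j.+1 - v j.+2 by rewrite -(@v_rec j.+1) ?addrK.
rewrite big_ord_recr /= IH ?(ltnW Sj_le_n) // [in RHS]big_ord_recr /= vj.
by field; rewrite !v_neq0 //; lia.
Qed.

Lemma ground_state_potential (w : nat -> R) :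
  \sum_(i < n.+1) (v i.+1 - v i) * (w i.+1 ^+ 2 / v i.+1 - w i ^+ 2 / v i)
  = lam * \sum_(i < n.+2) w i ^+ 2 - 2 * (w 0%N ^+ 2 + w n.+1 ^+ 2).
Proof.
rewrite ground_state_potential_partial // big_ord_recl big_ord_recr /= v_last.
by field; rewrite gt_eqF ?v_gt0.
Qed.

Lemma sqrB_ends_le (w : nat -> R) :
  (w n.+1 - w 0%N) ^+ 2
  <= \sum_(i < n.+1) v i * v i.+1 * (w i.+1 / v i.+1 - w i / v i) ^+ 2.
Proof.
have v_neq0 k : (k <= n.+1)%N -> v k != 0 by move=> ?; rewrite gt_eqF ?v_gt0.
have telescope : \sum_(i < n.+1) (w i.+1 / v i.+1 - w i / v i)
    = w n.+1 / v n.+1 - w 0%N / v 0%N.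
  by rewrite -(big_mkord xpredT (fun i => w i.+1 / v i.+1 - w i / v i)) telescope_sumr.
have := @sqr_sum_div_le _ n.+1 (fun i => w i.+1 / v i.+1 - w i / v i)
  (fun i => (v i * v i.+1)^-1).
rewrite telescope v_sum v_end.
have -> : (w n.+1 / v 0%N - w 0%N / v 0%N) ^+ 2 / (v 0%N ^+ 2)^-1
    = (w n.+1 - w 0%N) ^+ 2 by field; rewrite v_neq0.
under eq_bigr do rewrite invrK mulrC.
apply => i i_le_n; rewrite invr_gt0 mulr_gt0 ?v_gt0 //; lia.
Qed.

Lemma antiperiodic_form_le (w : nat -> R) :
  antiperiodic_form n w <= (1 - lam / 2) * \sum_(i < n.+2) w i ^+ 2.
Proof.
have v_neq0 k : (k <= n.+1)%N -> v k != 0 by move=> ?; rewrite gt_eqF ?v_gt0.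
have ground_state : \sum_(i < n.+1) (w i.+1 - w i) ^+ 2
    = \sum_(i < n.+1) v i * v i.+1 * (w i.+1 / v i.+1 - w i / v i) ^+ 2
      + (lam * \sum_(i < n.+2) w i ^+ 2 - 2 * (w 0%N ^+ 2 + w n.+1 ^+ 2)).
  rewrite -ground_state_potential -big_split /=.
  apply: eq_bigr => i _; have := ltn_ord i => i_le_n.
  by apply: sqrB_ground_state; apply: v_neq0; lia.
have expand : \sum_(i < n.+1) (w i.+1 - w i) ^+ 2
    = 2 * \sum_(i < n.+2) w i ^+ 2 - w 0%N ^+ 2 - w n.+1 ^+ 2
      - 2 * \sum_(i < n.+1) w i * w i.+1.
  have -> : 2 * \sum_(i < n.+2) w i ^+ 2 - w 0%N ^+ 2 - w n.+1 ^+ 2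
      = \sum_(i < n.+1) w i.+1 ^+ 2 + \sum_(i < n.+1) w i ^+ 2.
    have Sr : \sum_(i < n.+2) w i ^+ 2 = \sum_(i < n.+1) w i ^+ 2 + w n.+1 ^+ 2.
      by rewrite big_ord_recr.
    have Sl : \sum_(i < n.+2) w i ^+ 2 = w 0%N ^+ 2 + \sum_(i < n.+1) w i.+1 ^+ 2.
      by rewrite big_ord_recl.
    lra.
  rewrite mulr_sumr -big_split /= -sumrB /=.
  by apply: eq_bigr => i _; ring.
have := sqrB_ends_le w; rewrite /antiperiodic_form; lra.
Qed.

End AntiperiodicPath.

Section Sines.
Variable R : realType.

Lemma sinB_sinD (x y : R) : sin (x - y) + sin (x + y) = 2 * cos y * sin x.
Proof. by rewrite sinB sinD; ring. Qed.

Lemma sin_pi_sub (x : R) : sin (pi - x) = sin x.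
Proof. by rewrite addrC sinDpi sinN opprK. Qed.

Lemma cos_pi_sub (x : R) : cos (pi - x) = - cos x.
Proof. by rewrite addrC cosDpi cosN. Qed.

Variable n : nat.
Let f : R := pi / (2 * n.+2%:R).
Let v j := sin ((2 * j%:R + 1) * f).

Let f_gt0 : 0 < f.
Proof. by rewrite divr_gt0 ?pi_gt0 // mulr_gt0 ?ltr0n. Qed.

Let pi_eq : pi = 2 * n.+2%:R * f.
Proof. by rewrite /f mulrC divfK // mulf_neq0 ?pnatr_eq0. Qed.

Let v_gt0 j : (j <= n.+1)%N -> 0 < v j.
Proof.
move=> j_le; apply: sin_gt0_pi; apply/andP; split.
  by rewrite mulr_gt0 //; have := ler0n R j; lra.
rewrite [X in _ < X]pi_eq ltr_pM2r // -[n.+2%:R]natr1.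
have : (j%:R : R) <= n.+1%:R by rewrite ler_nat.
lra.
Qed.

Let lam := 2 - 2 * cos (2 * f).

Let v_rec j : (0 < j <= n)%N -> v j.-1 + v j.+1 = (2 - lam) * v j.
Proof.
have -> : 2 - lam = 2 * cos (2 * f) by rewrite /lam; ring.
case: j => // j _; rewrite /v -sinB_sinD.
by congr (sin _ + sin _) => /=; ring.
Qed.

Let v_first : v 1%N = (3 - lam) * v 0%N.
Proof.
have := sinB_sinD f (2 * f).
rewrite /v /lam (_ : f - 2 * f = - f) ?sinN; last by ring.
move=> H; rewrite [X in sin X = _](_ : _ = f + 2 * f); last by ring.
rewrite [X in _ = _ * sin X](_ : _ = f); last by ring.
by transitivity (2 * cos (2 * f) * sin f + sin f); [lra | ring].
Qed.

Let v_end : v n.+1 = v 0%N.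
Proof. by rewrite /v -sin_pi_sub pi_eq; congr sin; ring. Qed.

Let v_last : v n = (3 - lam) * v n.+1.
Proof. by rewrite v_end -v_first /v -sin_pi_sub pi_eq; congr sin; ring. Qed.

Let cot j := cos ((2 * j%:R + 1) * f) / v j.

Let v_sum : \sum_(i < n.+1) (v i * v i.+1)^-1 = (v 0%N ^+ 2)^-1.
Proof.
have v_neq0 j : (j <= n.+1)%N -> v j != 0 by move=> ?; rewrite gt_eqF ?v_gt0.
have cos_f_gt0 : 0 < cos f.
  have N_ge2 : (2 : R) <= n.+2%:R by rewrite (ler_nat R 2).
  apply: cos_gt0_pihalf; rewrite pi_eq (_ : _ / 2 = n.+2%:R * f); last by field.
  by apply/andP; split; have := f_gt0; nra.
have sin_f_gt0 : 0 < sin f.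
  by move: (v_gt0 (leq0n n.+1)); rewrite /v mulr0 add0r mul1r.
have sin_2f : sin (2 * f) = 2 * sin f * cos f.
  by rewrite (_ : 2 * f = f + f) ?sinD; ring.
have sin_2f_gt0 : 0 < sin (2 * f) by rewrite sin_2f !mulr_gt0.
have inv_v_mul i : (i <= n)%N -> (v i * v i.+1)^-1 = (cot i - cot i.+1) / sin (2 * f).
  move=> i_le; have sin_2fE : sin (2 * f)
      = sin ((2 * i.+1%:R + 1) * f) * cos ((2 * i%:R + 1) * f)
        - cos ((2 * i.+1%:R + 1) * f) * sin ((2 * i%:R + 1) * f).
    by rewrite -sinB; congr sin; ring.
  rewrite /cot /v sin_2fE; field; rewrite -sin_2fE gt_eqF //.
  by rewrite !v_neq0 //; lia.
have cot_end : cot n.+1 = - cot 0%N.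
  rewrite /cot v_end [X in cos X](_ : _ = pi - (2 * 0%:R + 1) * f) ?cos_pi_sub ?mulNr //.
  by rewrite pi_eq; ring.
rewrite (eq_bigr (fun i : 'I_n.+1 => (cot i - cot i.+1) / sin (2 * f))); last first.
  by move=> i _; rewrite inv_v_mul // -ltnS.
rewrite -mulr_suml -(big_mkord xpredT (fun i => cot i - cot i.+1)).
rewrite (telescope_sumr_eq (fun k => - cot k)) => [|//|k _]; last by rewrite opprK addrC.
rewrite cot_end opprK /cot /v sin_2f (_ : (2 * 0%:R + 1) * f = f); last by ring.
by field; rewrite !gt_eqF.
Qed.

Lemma antiperiodic_form_le_cos (w : nat -> R) :
  antiperiodic_form n w <= cos (pi / n.+2%:R) * \sum_(i < n.+2) w i ^+ 2.
Proof.
have -> : cos (pi / n.+2%:R) = 1 - lam / 2.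
  have -> : pi / n.+2%:R = 2 * f by rewrite /f; field.
  by rewrite /lam; field.
exact: antiperiodic_form_le v_gt0 v_first v_rec v_last v_end v_sum w.
Qed.
End Sines.

Lemma cos_pi_divSS_ge0 (R : realType) (k : nat) : 0 <= cos (pi / k.+2%:R : R).
Proof.
have pi_gt0 : (0 : R) < pi := pi_gt0 R.
apply: cos_ge0_pihalf; apply/andP; split.
  by rewrite (le_trans _ (divr_ge0 (ltW pi_gt0) (ler0n _ _))) // oppr_le0 divr_ge0 ?ltW.
by rewrite ler_pM2l // lef_pV2 ?posrE ?ltr0n // (ler_nat R 2).
Qed.

Lemma exists_gain_scaling (R : realType) (N : nat) (P delta c : R) :
  0 < P -> 0 < delta -> P * c ^+ N.+1 < delta ->
  exists2 b, 0 < b & b ^+ N.+1 = P / delta /\ b * c < 1.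
Proof.
move=> P_gt0 delta_gt0 small_c.
have ratio_gt0 : 0 < P / delta by rewrite divr_gt0.
exists ((P / delta) `^ N.+1%:R^-1); first by rewrite powR_gt0.
have bN : ((P / delta) `^ N.+1%:R^-1) ^+ N.+1 = P / delta.
  by rewrite -powR_mulrn ?powR_ge0 // -powRrM mulVf ?powRr1 // ?ltW.
split => //; rewrite ltNge; apply/negP => /(exprn_ege1 N.+1).
by rewrite exprMn bN mulrAC ler_pdivlMr // mul1r; apply/negP; rewrite -ltNge.
Qed.

Section CascadeRescaling.
Variables (R : realFieldType) (n : nat) (gamma : nat -> R) (s b : R).
Hypothesis gamma_gt0 : forall i, (i < n.+1)%N -> 0 < gamma i.
Hypothesis s_gt0 : 0 < s.
Hypothesis b_gt0 : 0 < b.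

Definition gain_scale k := (\prod_(j < k) gamma j) / (s * b ^+ k).

Definition storage_weight i := (gain_scale i.+1 ^+ 2)^-1.

Lemma gain_scale_gt0 k : (k <= n.+1)%N -> 0 < gain_scale k.
Proof.
move=> k_le; rewrite divr_gt0 ?mulr_gt0 ?exprn_gt0 //.
by apply: prodr_gt0 => j _; apply: gamma_gt0; apply: leq_trans (ltn_ord j) k_le.
Qed.

Lemma storage_weight_gt0 i : (i < n.+1)%N -> 0 < storage_weight i.
Proof. by move=> i_lt; rewrite invr_gt0 exprn_gt0 ?gain_scale_gt0. Qed.

Lemma sum_gain_scale_gt0 : 0 < \sum_(i < n.+1) gain_scale i.+1 ^+ 2.
Proof.
rewrite big_ord_recl /=; apply: (lt_le_trans (exprn_gt0 2 (gain_scale_gt0 (ltn0Sn n)))).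
by rewrite lerDl; apply: sumr_ge0 => i _; exact: sqr_ge0.
Qed.

Variable c : R.
Hypothesis form_le : forall w, antiperiodic_form n w <= c * \sum_(i < n.+2) w i ^+ 2.
Hypothesis bc_lt1 : b * c < 1.
Hypothesis prod_gamma : \prod_(i < n.+1) gamma i = s ^+ 2 * b ^+ n.+2.

Variables (y : nat -> R) (u : R).

Let input k := if k is j.+1 then y j else u.
Let w k := if k is j.+1 then y j / gain_scale k else s * u.

Let supply_rescaled :
  \sum_(i < n.+1) storage_weight i * (- y i ^+ 2 + gamma i * input i * y i)
  = - \sum_(i < n.+1) w i.+1 ^+ 2 + b * \sum_(i < n.+1) w i * w i.+1.
Proof.
rewrite mulr_sumr -sumrN -big_split /=; apply: eq_bigr => -[[|i] i_lt] _ /=.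
  rewrite /storage_weight /gain_scale big_ord1 expr1.
  by field; rewrite !gt_eqF ?gamma_gt0.
have prod_gt0 : 0 < \prod_(j < i.+1) gamma j.
  by apply: prodr_gt0 => j _; apply: gamma_gt0; apply: ltn_trans (ltn_ord j) i_lt.
rewrite /storage_weight /gain_scale big_ord_recr [b ^+ i.+2]exprS /=.
by field; rewrite !gt_eqF ?gamma_gt0 ?exprn_gt0.
Qed.

Lemma supply_rate_le :
  \sum_(i < n.+1) storage_weight i * (- y i ^+ 2 + gamma i * input i * y i)
  <= - ((1 - b * c) / \sum_(i < n.+1) gain_scale i.+1 ^+ 2) * \sum_(i < n.+1) y i ^+ 2
     + s ^+ 2 * u ^+ 2 + u * y n.
Proof.
rewrite supply_rescaled.
set M := \sum_(i < n.+1) gain_scale i.+1 ^+ 2.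
set A := \sum_(i < n.+1) w i.+1 ^+ 2.
have sum_w : \sum_(i < n.+2) w i ^+ 2 = w 0%N ^+ 2 + A by rewrite big_ord_recl.
have bform := ler_wpM2l (ltW b_gt0) (form_le w); rewrite sum_w in bform.
have w0_sqr : s ^+ 2 * u ^+ 2 = w 0%N ^+ 2 by rewrite exprMn.
have w_end : u * y n = b * (w 0%N * w n.+1).
  rewrite /w /gain_scale prod_gamma [b ^+ n.+2]exprS.
  by field; rewrite !gt_eqF ?exprn_gt0.
have Y_le : \sum_(i < n.+1) y i ^+ 2 <= M * A.
  rewrite mulr_sumr; apply: ler_sum => i _.
  have -> : y i ^+ 2 = gain_scale i.+1 ^+ 2 * w i.+1 ^+ 2.
    by rewrite /w; field; rewrite gt_eqF ?gain_scale_gt0.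
  rewrite ler_wpM2r ?sqr_ge0 // /M (bigD1 i) //= lerDl.
  by apply: sumr_ge0 => j _; exact: sqr_ge0.
have eps_Y : (1 - b * c) / M * \sum_(i < n.+1) y i ^+ 2 <= (1 - b * c) * A.
  apply: le_trans (ler_wpM2l _ Y_le) _; first by rewrite divr_ge0 ?subr_ge0 ?ltW ?sum_gain_scale_gt0.
  by rewrite mulrA divfK ?gt_eqF ?sum_gain_scale_gt0.
have w0_term : 0 <= (1 - b * c) * w 0%N ^+ 2 by rewrite mulr_ge0 ?subr_ge0 ?sqr_ge0 ?ltW.
rewrite w0_sqr w_end /antiperiodic_form in bform *.
lra.
Qed.

End CascadeRescaling.

Theorem corollary3 (R : realType) (n : nat) (hn : (1 <= n)%N)
  (gamma : nat -> R) (hgamma : forall i, (i < n)%N -> 0 < gamma i)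
  (m : nat -> nat)
  (f : forall i, 'rV[R]_(m i) -> R -> 'rV[R]_(m i))
  (h : forall i, 'rV[R]_(m i) -> R)
  (V : forall i, 'rV[R]_(m i) -> R)
  (hV : forall i, (i < n)%N -> C1 (V i))
  (hdiss : forall i, (i < n)%N -> forall (xi : 'rV[R]_(m i)) (ui : R),
      'd (V i) xi (f i xi ui) <= - (h i xi) ^+ 2 + gamma i * ui * h i xi)
  (delta : R)
  (hdelta : (\prod_(i < n) gamma i) * (cos (pi / n.+1%:R)) ^+ n.+1 < delta) :
  exists (d : nat -> R) (eps : R),
    (forall i, (i < n)%N -> 0 < d i) /\ 0 < eps /\
    forall (x : forall i, 'rV[R]_(m i)) (u : R),
      \sum_(i < n) d i * 'd (V i) (x i) (f i (x i) (cascade_input h x u i))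
      <= - eps * (\sum_(i < n) (h i (x i)) ^+ 2) + delta * u ^+ 2
         + u * h n.-1 (x n.-1).
Proof.
case: n hn hgamma hV hdiss hdelta => [//|n] _ gamma_gt0 _ hdiss hdelta.
set c := cos (pi / n.+2%:R) in hdelta.
have prod_gt0 : 0 < \prod_(i < n.+1) gamma i by apply: prodr_gt0 => i _; exact: gamma_gt0.
have delta_gt0 : 0 < delta.
  by apply: le_lt_trans hdelta; rewrite mulr_ge0 ?exprn_ge0 ?cos_pi_divSS_ge0 ?ltW.
have [b b_gt0 [bN bc_lt1]] := exists_gain_scaling prod_gt0 delta_gt0 hdelta.
pose s := Num.sqrt delta.
have s_gt0 : 0 < s by rewrite sqrtr_gt0.
have s_sqr : s ^+ 2 = delta by rewrite sqr_sqrtr ?ltW.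
have prod_gamma : \prod_(i < n.+1) gamma i = s ^+ 2 * b ^+ n.+2.
  by rewrite s_sqr bN mulrC divfK ?gt_eqF.
exists (storage_weight gamma s b),
  ((1 - b * c) / \sum_(i < n.+1) gain_scale gamma s b i.+1 ^+ 2).
split; first exact: storage_weight_gt0.
split; first by rewrite divr_gt0 ?subr_gt0 ?sum_gain_scale_gt0.
move=> x u; rewrite -s_sqr.
apply: le_trans (supply_rate_le gamma_gt0 s_gt0 b_gt0
  (@antiperiodic_form_le_cos R n) bc_lt1 prod_gamma (fun i => h i (x i)) u).
apply: ler_sum => i _; rewrite ler_pM2l ?(storage_weight_gt0 gamma_gt0 s_gt0 b_gt0) //.
exact: hdiss.
Qed.
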